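(* Let $X=\mathbb Z$, $m\equiv1$, $b(x,y)=1$ if $|x-y|=1$ and $b(x,y)=0$ otherwise, and $D=2\mathbb Z$. Then for every $T>0$, $r\in[1,\infty]$ and $K\ge0$ the linear control problem $(H,D)$ is not $(0,T,r,K)$-controllable.
   Context: $H$ is the weighted Laplacian on $\ell_2(X,m)$, $Hf(x)=\frac1{m(x)}\sum_yb(x,y)(f(x)-f(y))$ (here $Hf(x)=2f(x)-f(x-1)-f(x+1)$), $S_t=e^{-tH}$. The control problem $(H,D)$ is $\dot f=-Hf+\mathbf 1_Du$, $f(0)=f_0\in\ell_2(X,m)$, where $\mathbf 1_D$ is extension by zero from $\ell_2(D,m|_D)$, with mild solution $f(t)=S_tf_0+\int_0^tS_{t-\tau}\mathbf 1_Du(\tau)d\tau$; it is $(\alpha,T,r,K)$-controllable if for every $f_0$ there is $u\in L_r((0,T);\ell_2(D,m|_D))$ with $\|u\|_{L_r((0,T);\ell_2(D,m|_D))}\le K\|f_0\|$ and $\|f(T)\|\le\alpha\|f_0\|$. *)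

From HB Require Import structures.
From mathcomp Require Import all_boot all_order all_algebra.
From mathcomp Require Import all_classical all_reals all_analysis.
Set Implicit Arguments. Unset Strict Implicit. Unset Printing Implicit Defensive.
Import Order.TTheory GRing.Theory Num.Theory.
Import numFieldNormedType.Exports.
Local Open Scope classical_set_scope.
Local Open Scope ring_scope.

Section Defs.
Variable R : realType.

(* X = Z, m = 1: squared l2-norm as an extended real (+oo if not in l2). *)
Definition l2sq (f : int -> R) : \bar R := \esum_(x in [set: int]) ((f x) ^+ 2)%:E.
Definition l2_in (f : int -> R) : Prop := (l2sq f < +oo)%E.
Definition l2norm (f : int -> R) : R := Num.sqrt (fine (l2sq f)).

(* b(x,y) = 1 iff |x-y| = 1; H f(x) = sum_y b(x,y)(f x - f y) = 2 f x - f(x-1) - f(x+1). *)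
Definition Hlap (f : int -> R) : int -> R :=
  fun x => (f x - f (x - 1)%R) + (f x - f (x + 1)%R).

(* S_t f = e^{-tH} f = sum_k (-t)^k/k! H^k f  (H bounded; coordinatewise). *)
Definition Ssemi (t : R) (f : int -> R) : int -> R :=
  fun x => limn (fun n : nat => \sum_(0 <= k < n) ((- t) ^+ k / (k`!)%:R * iter k Hlap f x)).

Definition I0T (T : R) : set R := `]0, T[%classic.

Definition inD (x : int) : bool := (2 %| x)%Z.
Definition extD (g : int -> R) : int -> R := fun x => if inD x then g x else 0.

Definition mild (T : R) (f0 : int -> R) (u : R -> int -> R) : int -> R :=
  fun x => Ssemi T f0 x +
    fine (\int[lebesgue_measure]_(tau in I0T T) (Ssemi (T - tau) (extD (u tau)) x)%:E)%E.

Definition unorm (T : R) (u : R -> int -> R) : R -> \bar R :=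
  fun tau => (if tau \in I0T T then l2norm (extD (u tau)) else 0)%:E.

Definition admissible (T : R) (r : \bar R) (K : R) (f0 : int -> R)
    (u : R -> int -> R) : Prop :=
  (forall x, measurable_fun (I0T T) (fun tau => u tau x)) /\
  (forall tau, I0T T tau -> l2_in (extD (u tau))) /\
  (Lnorm lebesgue_measure r (unorm T u) <= (K * l2norm f0)%:E)%E.

Definition controllable (alpha T : R) (r : \bar R) (K : R) : Prop :=
  forall f0 : int -> R, l2_in f0 ->
    exists u : R -> int -> R, admissible T r K f0 u /\
      l2_in (mild T f0 u) /\ l2norm (mild T f0 u) <= alpha * l2norm f0.

End Defs.

From mathcomp Require Import all_boot all_order all_algebra.
From mathcomp Require Import all_classical all_reals all_analysis.
From mathcomp Require Import measurable_realfun.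
From mathcomp Require Import zify ring lra.
Set Implicit Arguments. Unset Strict Implicit. Unset Printing Implicit Defensive.
Import Order.TTheory GRing.Theory Num.Theory.
Import numFieldNormedType.Exports.
Local Open Scope ring_scope.
Local Open Scope classical_set_scope.

(* Let A_M w := sum_(k < M) (-1)^k w(2k+1), a functional which only reads odd
   sites.  A direct computation gives A_M (H w) = 2 A_M w - w(0) + (-1)^M w(2M),
   whose defect only involves even sites; iterating along the exponential series,
   A_M (S_t w) = e^{-2t} A_M w up to an error 2 e^{4|t|} sup|w|, uniformly in M.
   A control acts through 1_D u with D = 2Z, on which A_M vanishes, so it shifts
   A_M f(T) by at most 2 e^{4T} int_0^T ||u||, which by Hoelder is O(K ||f0||).
   For f0 = sum_(k < M) (-1)^k delta_(2k+1) we have A_M f0 = M but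
   ||f0|| = O(sqrt M), so A_M f(T) > 0 for M large and f(T) cannot vanish. *)

Section alternating_sum.
Variable R : realType.
Implicit Types (w : int -> R) (B : R).
Local Notation H := (@Hlap R).

Lemma Hlap_iter_bound w B : (forall y, `|w y| <= B) ->
  forall k y, `|iter k H w y| <= 4 ^+ k * B.
Proof.
move=> wB; elim=> [|k IH] y; first by rewrite expr0 mul1r.
rewrite iterS /Hlap exprS -mulrA.
have := IH y; have := IH (y - 1); have := IH (y + 1).
set a := iter k H w => h1 h2 h3.
apply: le_trans (ler_normD _ _) _.
apply: le_trans (lerD (ler_normB _ _) (ler_normB _ _)) _.
lra.
Qed.

Definition altsum (M : nat) w : R := \sum_(k < M) (-1) ^+ k * w (Posz k.*2.+1).

Lemma altsumD M v w : altsum M (fun x => v x + w x) = altsum M v + altsum M w.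
Proof. by rewrite /altsum -big_split; apply: eq_bigr => k _; rewrite mulrDr. Qed.

Lemma altsum_extD M w : altsum M (extD w) = 0.
Proof.
rewrite /altsum big1 // => k _.
by rewrite /extD /inD dvdzE /= dvdn2 /= odd_double mulr0.
Qed.

Lemma altsum_Hlap M w :
  altsum M (H w) = 2 * altsum M w - w 0 + (-1) ^+ M * w (Posz M.*2).
Proof.
elim: M => [|M IH]; first by rewrite /altsum !big_ord0 expr0 mul1r /=; ring.
rewrite /altsum in IH *; rewrite big_ord_recr /= IH big_ord_recr /= /Hlap.
have -> : (Posz M.*2.+1 - 1)%R = Posz M.*2 by lia.
have -> : (Posz M.*2.+1 + 1)%R = Posz M.+1.*2 by lia.
rewrite exprS; ring.
Qed.

Lemma altsum_iter_Hlap M w B : (forall y, `|w y| <= B) ->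
  forall k, `|altsum M (iter k H w) - 2 ^+ k * altsum M w| <= 2 * 4 ^+ k * B.
Proof.
move=> wB; have B0 : 0 <= B := le_trans (normr_ge0 _) (wB 0).
elim=> [|k IH]; first by rewrite expr0 mul1r subrr normr0 mulr1 mulr_ge0.
rewrite iterS altsum_Hlap.
have := Hlap_iter_bound wB k; set a := iter k H w => aB.
have a0 := aB 0; have a2M := aB (Posz M.*2).
have aM : `|(-1) ^+ M * a (Posz M.*2)| <= 4 ^+ k * B.
  by rewrite normrM normrX normrN1 expr1n mul1r.
have kB : 0 <= 4 ^+ k * B by rewrite mulr_ge0 // exprn_ge0.
rewrite !exprS.
have -> : 2 * altsum M a - a 0 + (-1) ^+ M * a (Posz M.*2) - 2 * 2 ^+ k * altsum M w
    = 2 * (altsum M a - 2 ^+ k * altsum M w) - a 0 + (-1) ^+ M * a (Posz M.*2).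
  by ring.
apply: le_trans (ler_normD _ _) _.
apply: le_trans (lerD (ler_normB _ _) (lexx _)) _.
rewrite normrM normr_nat.
lra.
Qed.

End alternating_sum.

Section exponential_series.
Variable R : realType.
Implicit Types (t B : R) (w : int -> R) (x : int).
Local Notation H := (@Hlap R).

Definition Ssemi_term t w x (k : nat) : R := (- t) ^+ k / (k`!)%:R * iter k H w x.

Lemma SsemiE t w x : Ssemi t w x = limn (series (Ssemi_term t w x)).
Proof. by []. Qed.

Lemma exp_coeff_ge0 t k : 0 <= t -> 0 <= exp_coeff t k.
Proof. by move=> t0; rewrite /exp_coeff /= divr_ge0 // exprn_ge0. Qed.

Lemma is_cvg_series_exp_coeffZ B t : cvgn (series (fun k => B * exp_coeff t k)).
Proof. exact: is_cvg_seriesZ (is_cvg_series_exp_coeff t). Qed.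

Lemma lim_series_exp_coeffZ B t :
  limn (series (fun k => B * exp_coeff t k)) = B * expR t.
Proof. exact: lim_seriesZ (is_cvg_series_exp_coeff t). Qed.

Lemma Ssemi_term_bound t w B x k : (forall y, `|w y| <= B) ->
  `|Ssemi_term t w x k| <= B * exp_coeff (4 * `|t|) k.
Proof.
move=> wB; rewrite /Ssemi_term /exp_coeff /= normrM normf_div normrX normrN normr_nat.
have -> : B * ((4 * `|t|) ^+ k / (k`!)%:R) = `|t| ^+ k / (k`!)%:R * (4 ^+ k * B).
  by rewrite exprMn; ring.
by rewrite ler_wpM2l ?divr_ge0 ?exprn_ge0 // Hlap_iter_bound.
Qed.

Lemma is_cvg_normed_Ssemi_series t w B x : (forall y, `|w y| <= B) ->
  cvgn [normed series (Ssemi_term t w x)].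
Proof.
move=> wB; have B0 : 0 <= B := le_trans (normr_ge0 _) (wB 0).
apply: (series_le_cvg (v_ := fun k => B * exp_coeff (4 * `|t|) k)).
- by move=> n; exact: normr_ge0.
- by move=> n; rewrite mulr_ge0 // exp_coeff_ge0 // mulr_ge0.
- by move=> n; exact: Ssemi_term_bound.
exact: is_cvg_series_exp_coeffZ.
Qed.

Lemma is_cvg_Ssemi_series t w B x : (forall y, `|w y| <= B) ->
  cvgn (series (Ssemi_term t w x)).
Proof. by move=> wB; apply: normed_cvg; exact: is_cvg_normed_Ssemi_series wB. Qed.

Lemma Ssemi_bound t w B x : (forall y, `|w y| <= B) ->
  `|Ssemi t w x| <= B * expR (4 * `|t|).
Proof.
move=> wB; have cvgN := is_cvg_normed_Ssemi_series (t := t) (x := x) wB.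
rewrite SsemiE -lim_series_exp_coeffZ.
apply: le_trans (lim_series_norm cvgN) _.
apply: lim_series_le; [exact: cvgN | exact: is_cvg_series_exp_coeffZ | move=> n].
exact: Ssemi_term_bound.
Qed.

Lemma altsum_Ssemi_series_bound M t w B n : (forall y, `|w y| <= B) ->
  `|altsum M (fun x => series (Ssemi_term t w x) n)
      - series (exp_coeff (2 * - t)) n * altsum M w| <= 2 * B * expR (4 * `|t|).
Proof.
move=> wB; have B0 : 0 <= B := le_trans (normr_ge0 _) (wB 0).
pose c k := (- t) ^+ k / (k`!)%:R.
have partial_altsum : altsum M (fun x => series (Ssemi_term t w x) n) =
    \sum_(0 <= k < n) c k * altsum M (iter k H w).
  rewrite /altsum /series /=; under eq_bigr do rewrite mulr_sumr.
  rewrite exchange_big /=; apply: eq_bigr => k _; rewrite mulr_sumr.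
  by apply: eq_bigr => j _; rewrite /Ssemi_term /c; ring.
have partial_exp : series (exp_coeff (2 * - t)) n * altsum M w =
    \sum_(0 <= k < n) c k * (2 ^+ k * altsum M w).
  rewrite /series /exp_coeff /= mulr_suml; apply: eq_bigr => k _.
  by rewrite /c exprMn; ring.
rewrite partial_altsum partial_exp -sumrB.
under eq_bigr do rewrite -mulrBr.
apply: le_trans (ler_norm_sum _ _ _) _.
rewrite -lim_series_exp_coeffZ.
apply: (le_trans (y := series (fun k => 2 * B * exp_coeff (4 * `|t|) k) n)).
  rewrite /series /=; apply: ler_sum => k _.
  rewrite normrM normf_div normrX normrN normr_nat /exp_coeff /=.
  have -> : 2 * B * ((4 * `|t|) ^+ k / (k`!)%:R) =
      `|t| ^+ k / (k`!)%:R * (2 * 4 ^+ k * B) by rewrite exprMn; ring.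
  by rewrite ler_wpM2l ?divr_ge0 ?exprn_ge0 // altsum_iter_Hlap.
apply: nondecreasing_cvgn_le; last exact: is_cvg_series_exp_coeffZ.
apply: nondecreasing_series => k _ _.
by rewrite mulr_ge0 ?mulr_ge0 // exp_coeff_ge0 // mulr_ge0.
Qed.

Lemma altsum_Ssemi M t w B : (forall y, `|w y| <= B) ->
  `|altsum M (Ssemi t w) - expR (2 * - t) * altsum M w| <= 2 * B * expR (4 * `|t|).
Proof.
move=> wB.
have cvg_altsum : altsum M (fun x => series (Ssemi_term t w x) n)
    @[n --> \oo] --> altsum M (Ssemi t w).
  apply: cvg_big => [|k _]; first exact: add_continuous.
  apply: cvgMr; rewrite SsemiE; exact: is_cvg_Ssemi_series wB.
have cvg_exp : series (exp_coeff (2 * - t)) n * altsum M w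
    @[n --> \oo] --> expR (2 * - t) * altsum M w.
  by apply: cvgMl; exact: is_cvg_series_exp_coeff.
have cvg_diff : `|altsum M (fun x => series (Ssemi_term t w x) n)
    - series (exp_coeff (2 * - t)) n * altsum M w| @[n --> \oo] -->
    `|altsum M (Ssemi t w) - expR (2 * - t) * altsum M w|.
  by apply: cvg_norm; exact: cvgB.
rewrite -(cvg_lim (@Rhausdorff R) cvg_diff).
apply: limr_le; first by apply/cvg_ex; eexists; exact: cvg_diff.
by apply: nearW => n; exact: altsum_Ssemi_series_bound.
Qed.

End exponential_series.

Section l2_norm.
Variable R : realType.
Implicit Types (v : int -> R) (N : nat).

Definition window N : seq int :=
  [seq Posz n | n <- iota 0 N] ++ [seq Negz n | n <- iota 0 N].

Lemma window_uniq N : uniq (window N).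
Proof.
rewrite /window cat_uniq !map_inj_uniq ?iota_uniq /=; last 2 first.
- by move=> a b [].
- by move=> a b [].
rewrite andbT; apply/hasPn => x /mapP[n _ ->]; apply/negP => /mapP[m _] //.
Qed.

Lemma mem_window N x : (absz x < N)%N -> x \in window N.
Proof.
rewrite /window mem_cat; case: x => n /= xN; apply/orP.
  by left; apply/mapP; exists n; rewrite // mem_iota.
by right; apply/mapP; exists n; rewrite // mem_iota /= ltnW.
Qed.

Definition window_sqsum v N : R :=
  \sum_(0 <= n < N) (v (Posz n) ^+ 2 + v (Negz n) ^+ 2).

Lemma fsum_window v N :
  \sum_(x <- window N) ((v x) ^+ 2)%:E = (window_sqsum v N)%:E.
Proof.
rewrite /window big_cat !big_map /window_sqsum -sumEFin.
under [RHS]eq_bigr do rewrite EFinD.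
by rewrite big_split /= /index_iota subn0.
Qed.

Lemma l2sq_ge0 v : (0 <= l2sq v)%E.
Proof. by apply: esum_ge0 => x _; rewrite lee_fin sqr_ge0. Qed.

Lemma l2sq_window_sup v :
  l2sq v = ereal_sup (range (fun N => (window_sqsum v N)%:E)).
Proof.
apply/le_anti/andP; split; last first.
  apply: ge_ereal_sup => _ [N _ <-]; rewrite -fsum_window /l2sq.
  rewrite fsbig_seq ?window_uniq //; apply: esum_ge.
  by exists [set` window N] => //; split => //; exact: finite_seq.
apply: ge_ereal_sup => _ [A [finA _] <-].
have [s ->] := (finite_seqP A).1 finA.
pose N := (\max_(x <- s) absz x).+1.
apply: (le_trans (y := (window_sqsum v N)%:E)); last first.
  by apply: ereal_sup_ubound; exists N.
rewrite -fsum_window (fsbig_seq _ _ (window_uniq N)).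
apply: lee_fsum_nneg_subset; [exact: finite_seq | exact: finite_seq | | ].
- move=> x; rewrite !mem_setE => xs; apply: mem_window.
  by rewrite ltnS; exact: (@leq_bigmax_seq _ s xpredT (fun y => absz y) x xs isT).
- by move=> x _; rewrite lee_fin sqr_ge0.
Qed.

Lemma cvg_window_sqsum v : (window_sqsum v N)%:E @[N --> \oo] --> l2sq v.
Proof.
rewrite l2sq_window_sup; apply: ereal_nondecreasing_cvgn => n m nm.
rewrite lee_fin; apply: nondecreasing_series nm => k _ _.
by rewrite addr_ge0 // sqr_ge0.
Qed.

Lemma sqr_le_l2sq v y : ((v y ^+ 2)%:E <= l2sq v)%E.
Proof.
apply: esum_ge; exists [set y]; first by split => //; exact: finite_set1.
by rewrite fsbig_set1.
Qed.

Lemma norm_le_l2norm v y : l2_in v -> `|v y| <= l2norm v.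
Proof.
move=> v2; have vfin : l2sq v \is a fin_num by rewrite ge0_fin_numE ?l2sq_ge0.
rewrite /l2norm -sqrtr_sqr ler_sqrt ?fine_ge0 ?l2sq_ge0 //.
by rewrite -lee_fin fineK // sqr_le_l2sq.
Qed.

Lemma l2norm_le v (a : R) : 0 <= a ->
  (l2sq v <= (a ^+ 2)%:E)%E -> l2_in v /\ l2norm v <= a.
Proof.
move=> a0 va; have vfin : l2sq v \is a fin_num.
  by rewrite ge0_fin_numE ?l2sq_ge0 // (le_lt_trans va) ?ltry.
split; first by rewrite /l2_in -ge0_fin_numE ?l2sq_ge0.
rewrite /l2norm -(ger0_norm a0) -sqrtr_sqr ler_sqrt ?sqr_ge0 //.
by rewrite -lee_fin fineK.
Qed.

Lemma l2norm_le0 v x : l2_in v -> l2norm v <= 0 -> v x = 0.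
Proof.
move=> v2 v0; apply/normr0_eq0/le_anti.
by rewrite normr_ge0 andbT (le_trans (norm_le_l2norm x v2)).
Qed.

End l2_norm.

Section control_measurability.
Variables (R : realType) (T : R) (u : R -> int -> R).
Hypothesis measurable_u : forall x, measurable_fun (I0T T) (fun tau => u tau x).
Hypothesis l2_u : forall tau, I0T T tau -> l2_in (extD (u tau)).
Local Notation H := (@Hlap R).

Lemma measurable_iter_Hlap_control k x :
  measurable_fun (I0T T) (fun tau => iter k H (extD (u tau)) x).
Proof.
elim: k x => [|k IH] x /=.
  by rewrite /extD; case: (inD x); [exact: measurable_u | exact: measurable_cst].
by apply: measurable_funD; apply: measurable_funB; exact: IH.
Qed.

Lemma measurable_Ssemi_control x :
  measurable_fun (I0T T) (fun tau => Ssemi (T - tau) (extD (u tau)) x).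
Proof.
eapply (@measurable_fun_cvg _ _ _ _
  (fun n (tau : R) => series (Ssemi_term (T - tau) (extD (u tau)) x) n)).
  move=> n; apply: measurable_sum => k; apply: measurable_funM.
    apply: measurable_funM; last exact: measurable_cst.
    apply: measurable_funX; apply: (measurableT_comp (@oppr_measurable R setT)).
    by apply: measurable_funB; [exact: measurable_cst | exact: measurable_id].
  exact: measurable_iter_Hlap_control.
move=> tau /l2_u u2; rewrite SsemiE.
exact: is_cvg_Ssemi_series (fun y => norm_le_l2norm y u2).
Qed.

Lemma measurable_l2norm_control :
  measurable_fun (I0T T) (fun tau => l2norm (extD (u tau))).
Proof.
apply: measurableT_comp (continuous_measurable_fun (@sqrt_continuous R)) _.
eapply (@measurable_fun_cvg _ _ _ _ (fun N (tau : R) => window_sqsum (extD (u tau)) N)).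
  move=> N; apply: measurable_sum => n.
  by apply: measurable_funD; apply: measurable_funX;
    exact: (measurable_iter_Hlap_control 0).
move=> tau /l2_u u2.
have ufin : l2sq (extD (u tau)) \is a fin_num by rewrite ge0_fin_numE ?l2sq_ge0.
by have := cvg_window_sqsum (v := extD (u tau)); rewrite -(fineK ufin) => /fine_cvg.
Qed.

End control_measurability.

Section integral_le_Lnorm.
Context d (X : measurableType d) (R : realType) (mu : {measure set X -> \bar R}).
Variables (D : set X) (c : R).
Hypotheses (mD : measurable D) (muD : mu D = c%:E) (c0 : 0 < c).
Implicit Type h : X -> R.

Lemma integral_nneg_patch h : (forall x, 0 <= h x) ->
  (\int[mu]_(x in D) (h x)%:E = \int[mu]_x `|(h \_ D) x|%:E)%E.
Proof.
move=> h0; rewrite integral_mkcond; apply: eq_integral => x _.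
by rewrite /patch; case: ifP => _; rewrite ?normr0 // ger0_norm.
Qed.

Lemma integral_le_Lnorm_pinfty h : (forall x, 0 <= h x) -> measurable_fun D h ->
  (\int[mu]_(x in D) (h x)%:E <= c%:E * Lnorm mu +oo (EFin \o h \_ D))%E.
Proof.
move=> h0 mh; rewrite unlock /=.
have muT : (0 < mu [set: X])%E.
  apply: (@lt_le_trans _ _ (mu D)); first by rewrite muD lte_fin.
  by apply: le_measure; rewrite ?inE.
rewrite muT; set E := ess_sup_inf.ess_sup _ _.
have E0 : (0 <= E)%E.
  by apply: ess_sup_inf.ess_sup_gee => //; apply: nearW => x; exact: abse_ge0.
rewrite muleC -muD -integral_cst //.
apply: ae_ge0_le_integral => //.
- by move=> x _; rewrite lee_fin.
- exact/measurable_EFinP.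
- apply: filterS (ess_sup_inf.ess_sup_ge mu (abse \o (EFin \o h \_ D))) => x hx Dx.
  by move: hx; rewrite /= /patch (mem_set Dx) ger0_norm.
Qed.

Lemma integral_le_Lnorm_hoelder (p : R) h : 1 < p ->
  (forall x, 0 <= h x) -> measurable_fun D h ->
  (\int[mu]_(x in D) (h x)%:E <=
     (c `^ (1 - p^-1))%:E * Lnorm mu p%:E (EFin \o h \_ D))%E.
Proof.
move=> p1 h0 mh; have p0 : 0 < p by lra.
pose q := p / (p - 1).
have q0 : 0 < q by rewrite divr_gt0 // subr_gt0.
have pq : p^-1 + q^-1 = 1 by rewrite invf_div; field; lra.
have -> : 1 - p^-1 = q^-1 by rewrite -pq addrC addKr.
have mhD := (measurable_restrictT h mD).1 mh.
have m1D := (@measurable_indicP _ _ R D).1 mD.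
have := hoelder mu mhD m1D p0 q0 pq.
have -> : Lnorm mu 1 (EFin \o (h \_ D \* \1_D)%R) = (\int[mu]_(x in D) (h x)%:E)%E.
  rewrite Lnorm1 integral_nneg_patch //; apply: eq_integral => x _ /=.
  by rewrite /patch indicE; case: ifP => _; rewrite ?mulr1 ?mulr0.
have -> : Lnorm mu q%:E (EFin \o \1_D) = (c `^ q^-1)%:E.
  rewrite unlock -poweR_EFin -muD -[in RHS](setIT D) -integral_indic //.
  congr (_ `^ _)%E; apply: eq_integral => x _ /=; rewrite indicE.
  by case: (x \in D); rewrite /= ?normr1 ?normr0 ?powR1 ?powR0 ?gt_eqF.
by rewrite muleC.
Qed.

Lemma exists_integral_le_Lnorm (r : \bar R) : (1 <= r)%E -> exists k : R, 0 <= k /\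
  forall h, (forall x, 0 <= h x) -> measurable_fun D h ->
    (\int[mu]_(x in D) (h x)%:E <= k%:E * Lnorm mu r (EFin \o h \_ D))%E.
Proof.
case: r => [p| |] //= p1; last first.
  by exists c; split; [exact: ltW | exact: integral_le_Lnorm_pinfty].
move: p1; rewrite lee_fin le_eqVlt => /predU1P[<-|p1].
  exists 1; split => // h h0 _.
  by rewrite mul1e Lnorm1 integral_nneg_patch.
exists (c `^ (1 - p^-1)); split; first exact: powR_ge0.
by move=> h; exact: integral_le_Lnorm_hoelder.
Qed.

End integral_le_Lnorm.

Section Rintegral_sum.
Context d (X : measurableType d) (R : realType) (mu : {measure set X -> \bar R}).
Variables (D : set X) (I : Type) (f : I -> X -> R).
Hypotheses (mD : measurable D) (fi : forall i, mu.-integrable D (EFin \o f i)).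

Lemma integrable_sumr (s : seq I) :
  mu.-integrable D (EFin \o fun x => \sum_(i <- s) f i x).
Proof.
apply: eq_integrable mD _ _ _ (integrable_sum mD s (fun i _ => fi i)) => x _.
by rewrite /= sumEFin.
Qed.

Lemma Rintegral_sum (s : seq I) :
  Rintegral mu D (fun x => \sum_(i <- s) f i x) = \sum_(i <- s) Rintegral mu D (f i).
Proof.
elim: s => [|i s IH].
  under eq_fun do rewrite big_nil.
  by rewrite big_nil Rintegral_cst // mul0r.
rewrite big_cons -IH -RintegralD ?integrable_sumr //.
by apply: eq_Rintegral => x _; rewrite big_cons.
Qed.

End Rintegral_sum.

Lemma integrableZl_EFin d (X : measurableType d) (R : realType)
    (mu : {measure set X -> \bar R}) (D : set X) (a : R) (f : X -> R) :
  measurable D -> mu.-integrable D (EFin \o f) ->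
  mu.-integrable D (EFin \o fun x => a * f x).
Proof.
move=> mD fi; apply: eq_integrable mD _ _ _ (integrableZl mD a fi) => x _.
by rewrite /= EFinM.
Qed.

Section altsum_Rintegral.
Context d (X : measurableType d) (R : realType) (mu : {measure set X -> \bar R}).
Variables (D : set X) (F : int -> X -> R).
Hypotheses (mD : measurable D) (Fi : forall x, mu.-integrable D (EFin \o F x)).

Lemma integrable_altsum M :
  mu.-integrable D (EFin \o fun t => altsum M (fun x => F x t)).
Proof. by apply: integrable_sumr => // k; exact: integrableZl_EFin. Qed.

Lemma altsum_Rintegral M :
  altsum M (fun x => Rintegral mu D (F x)) =
  Rintegral mu D (fun t => altsum M (fun x => F x t)).
Proof.
rewrite Rintegral_sum => [|//|k]; last exact: integrableZl_EFin.
by apply: eq_bigr => k _; rewrite RintegralZl.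
Qed.

End altsum_Rintegral.

Lemma lebesgue_measure_I0T (R : realType) (T : R) :
  0 < T -> lebesgue_measure (I0T T) = T%:E.
Proof. by move=> T0; rewrite /I0T lebesgue_measure_itv /= lte_fin T0 sube0. Qed.

Lemma measurable_I0T (R : realType) (T : R) :
  measurable (I0T T : set (measurableTypeR R)).
Proof. exact: measurable_itv. Qed.

Section control_estimate.
Variables (R : realType) (T : R) (u : R -> int -> R).
Hypothesis T0 : 0 < T.
Hypothesis measurable_u : forall x, measurable_fun (I0T T) (fun tau => u tau x).
Hypothesis l2_u : forall tau, I0T T tau -> l2_in (extD (u tau)).
Let mu := @lebesgue_measure R.
Let B tau := l2norm (extD (u tau)).
Let F x tau := Ssemi (T - tau) (extD (u tau)) x.
Hypothesis integrable_B : mu.-integrable (I0T T) (EFin \o B).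

Lemma I0T_dist_le tau : I0T T tau -> `|T - tau| <= T.
Proof. by rewrite /I0T /= in_itv /= => /andP[t0 tT]; rewrite ger0_norm; lra. Qed.

Lemma control_le_l2norm tau : I0T T tau -> forall y, `|extD (u tau) y| <= B tau.
Proof. by move=> /l2_u u2 y; exact: norm_le_l2norm. Qed.

Lemma integrable_Ssemi_control x : mu.-integrable (I0T T) (EFin \o F x).
Proof.
have BE := integrableZl_EFin (expR (4 * T)) (measurable_I0T T) integrable_B.
apply: le_integrable BE => //; first exact: measurable_I0T.
  by apply/measurable_EFinP; exact: measurable_Ssemi_control.
move=> tau It /=; rewrite lee_fin (ger0_norm (mulr_ge0 (expR_ge0 _) (sqrtr_ge0 _))).
rewrite mulrC; apply: le_trans (Ssemi_bound (T - tau) x (control_le_l2norm It)) _.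
by rewrite ler_wpM2l ?sqrtr_ge0 // ler_expR ler_wpM2l // I0T_dist_le.
Qed.

Lemma altsum_Ssemi_control_bound M tau : I0T T tau ->
  `|altsum M (fun x => F x tau)| <= 2 * expR (4 * T) * B tau.
Proof.
move=> It; have := altsum_Ssemi M (T - tau) (control_le_l2norm It).
rewrite altsum_extD mulr0 subr0 => /le_trans; apply.
rewrite mulrAC ler_wpM2r ?sqrtr_ge0 // ler_wpM2l // ler_expR ler_wpM2l //.
exact: I0T_dist_le.
Qed.

Lemma altsum_control_bound M :
  `|altsum M (fun x => Rintegral mu (I0T T) (F x))| <=
    2 * expR (4 * T) * Rintegral mu (I0T T) B.
Proof.
have mI := measurable_I0T T.
rewrite (altsum_Rintegral mI integrable_Ssemi_control).
have G_int := integrable_altsum mI integrable_Ssemi_control M.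
have BE := integrableZl_EFin (2 * expR (4 * T)) mI integrable_B.
apply: le_trans (le_normr_Rintegral mI G_int) _.
rewrite -RintegralZl //; apply: le_Rintegral => //.
- apply: (le_integrable mI _ _ BE).
    apply/measurable_EFinP; apply: measurableT_comp (@normr_measurable R setT) _.
    by apply/measurable_EFinP; case/integrableP: G_int.
  move=> tau It /=; rewrite lee_fin normr_id.
  rewrite (ger0_norm (mulr_ge0 (mulr_ge0 _ (expR_ge0 _)) (sqrtr_ge0 _))) //.
  exact: altsum_Ssemi_control_bound.
- by move=> tau It; exact: altsum_Ssemi_control_bound.
Qed.

Lemma altsum_mild_lower_bound M w : (forall y, `|w y| <= 1) ->
  expR (2 * - T) * altsum M w <=
    altsum M (mild T w u) + 2 * expR (4 * T) * (1 + Rintegral mu (I0T T) B).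
Proof.
move=> w1; have -> : altsum M (mild T w u) =
    altsum M (Ssemi T w) + altsum M (fun x => Rintegral mu (I0T T) (F x)).
  exact: altsumD.
have := altsum_Ssemi M T w1; have := altsum_control_bound M.
rewrite (ger0_norm (ltW T0)) !ler_norml => /andP[? _] /andP[? _].
lra.
Qed.

End control_estimate.

Lemma admissible_cost_le (R : realType) (T : R) (r : \bar R) :
  0 < T -> (1 <= r)%E -> exists k : R, 0 <= k /\ forall K f0 u,
    admissible T r K f0 u ->
    let B tau := l2norm (extD (u tau)) in
    lebesgue_measure.-integrable (I0T T) (EFin \o B) /\
    Rintegral lebesgue_measure (I0T T) B <= k * (K * l2norm f0).
Proof.
move=> T0 r1; have [k [k0 Lnorm_k]] :=
  exists_integral_le_Lnorm (measurable_I0T T) (lebesgue_measure_I0T T0) T0 r1.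
exists k; split => // K f0 u [meas_u [l2_u Lnorm_u]] B.
have intB : (\int[lebesgue_measure]_(tau in I0T T) (B tau)%:E <=
    (k * (K * l2norm f0))%:E)%E.
  apply: le_trans (Lnorm_k B (fun=> sqrtr_ge0 _) _) _.
    exact: measurable_l2norm_control.
  by rewrite EFinM lee_wpmul2l ?lee_fin.
have integrable_B : lebesgue_measure.-integrable (I0T T) (EFin \o B).
  apply/integrableP; split.
    by apply/measurable_EFinP; exact: measurable_l2norm_control.
  under eq_integral do rewrite /= ger0_norm ?sqrtr_ge0 //.
  exact: le_lt_trans intB (ltry _).
split => //; rewrite -lee_fin fineK //.
by apply: integrable_fin_num integrable_B; exact: measurable_I0T.
Qed.

Section alternating_datum.
Variable R : realType.

Definition alt_datum (M : nat) (x : int) : R :=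
  if x is Posz n then (if odd n && (n < M.*2)%N then (-1) ^+ n./2 else 0) else 0.

Lemma alt_datum_bound M y : `|alt_datum M y| <= 1.
Proof.
case: y => n /=; last by rewrite normr0.
by case: ifP => _; rewrite ?normr0 // normrX normrN1 expr1n.
Qed.

Lemma altsum_alt_datum M : altsum M (alt_datum M) = M%:R.
Proof.
rewrite /altsum (eq_bigr (fun=> 1)) ?sumr_const ?card_ord // => k _ /=.
have -> : (k.*2.+1 < M.*2)%N by have := ltn_ord k; lia.
by rewrite odd_double /= uphalf_double -exprMn mulrNN mulr1 expr1n.
Qed.

Lemma sum_nat_lt_le (c N : nat) : \sum_(0 <= n < N) (((n < c)%N)%:R : R) <= c%:R.
Proof.
have -> : \sum_(0 <= n < N) (((n < c)%N)%:R : R) = (minn N c)%:R.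
  elim: N => [|N IH]; first by rewrite big_mkord big_ord0 min0n.
  rewrite big_nat_recr //= IH -natrD; congr (_%:R).
  by case: (ltnP N c) => h /=; lia.
by rewrite ler_nat geq_minr.
Qed.

Lemma l2sq_alt_datum M : (l2sq (alt_datum M) <= (M.*2)%:R%:E)%E.
Proof.
rewrite l2sq_window_sup; apply: ge_ereal_sup => _ [N _ <-]; rewrite lee_fin.
apply: le_trans (sum_nat_lt_le (M.*2) N); apply: ler_sum => n _ /=.
rewrite expr0n /= addr0.
case: ifP => [/andP[_ ->]|_]; last by rewrite expr0n /= ler0n.
by rewrite -exprM mulnC exprM sqrrN !expr1n.
Qed.

End alternating_datum.

Lemma l2_alt_datum_sqr (R : realType) (n : nat) :
  l2_in (alt_datum R (n ^ 2).*2) /\ l2norm (alt_datum R (n ^ 2).*2) <= 2 * n%:R.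
Proof.
apply: l2norm_le; first by rewrite mulr_ge0.
apply: le_trans (@l2sq_alt_datum R _) _.
by rewrite lee_fin -!mul2n !natrM expr2; lra.
Qed.

Lemma exists_nat_sqr_gt (R : archiFieldType) (a b e : R) :
  0 < e -> 0 <= a -> 0 <= b -> exists n : nat, a + b * n%:R < e * n%:R ^+ 2.
Proof.
move=> e0 a0 b0; exists (Num.trunc ((a + b) / e)).+1.
set n := _.+1; have n1 : 1 <= n%:R :> R by rewrite ler1n.
have : (a + b) / e < n%:R := truncnS_gt _.
rewrite ltr_pdivrMr // mulrC => abn.
have : (a + b) * n%:R < e * n%:R * n%:R by rewrite ltr_pM2r // ltr0n.
nra.
Qed.

Theorem mainTheorem4 (R : realType) (T : R) (r : \bar R) (K : R) :
  0 < T -> (1 <= r)%E -> 0 <= K -> ~ controllable 0 T r K.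
Proof.
move=> T0 r1 K0 controlT.
have [k [k0 cost_le]] := admissible_cost_le T0 r1.
pose E := expR (4 * T); pose e := expR (2 * - T).
have [n n_large] : exists n : nat, 2 * E + 4 * E * k * K * n%:R < 2 * e * n%:R ^+ 2.
  by apply: exists_nat_sqr_gt; rewrite ?mulr_gt0 ?mulr_ge0 ?expR_gt0 ?expR_ge0.
pose M := (n ^ 2).*2.
have [f0_l2 f0_norm] := l2_alt_datum_sqr R n.
have [u [u_adm [l2_fT]]] := controlT _ f0_l2; rewrite mul0r => fT0.
have [intB costB] := cost_le _ _ _ u_adm; case: u_adm => meas_u [l2_u _].
have := altsum_mild_lower_bound T0 meas_u l2_u intB M (@alt_datum_bound R M).
rewrite altsum_alt_datum /altsum big1 => [|j _]; last first.
  by rewrite (l2norm_le0 _ l2_fT fT0) mulr0.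
have := le_trans costB (ler_wpM2l k0 (ler_wpM2l K0 f0_norm)).
move/(ler_wpM2l (expR_ge0 (4 * T))).
move: (Rintegral _ _ _) => I.
rewrite /M -mul2n natrM natrX -/E -/e; lra.
Qed.
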